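(* Let $f$ be an intersection of $k$ halfspaces on $\mathbb{R}^n$ and let $\mathcal{D}$ be a distribution on $\mathbb{R}^n$ that is $\rho$-robust with respect to $f$, where $\rho>0$, and suppose $\mathrm{supp}(\mathcal{D})\not\subset f^{-1}(-1)$. Then $\mathcal{D}$ has margin $\frac{1}{2}\rho^2$ with respect to $f$.
   Context: An intersection of $k$ halfspaces is $f(x)=1$ if $w_i\cdot x>\theta_i$ for all $i\in[k]$, $f(x)=-1$ otherwise, with $\|w_i\|_2=1$, $\theta_i\in\mathbb{R}$. Let $R=\sup_{x\in\mathrm{supp}(\mathcal{D})}\|x\|_2$. $\mathcal{D}$ is $\rho$-robust with respect to $f$ if $\inf\{\|x-y\|_2: x\in\mathrm{supp}(\mathcal{D}), y\in\mathbb{R}^n, f(x)\ne f(y)\}/R\ge\rho$. $\mathcal{D}$ has margin $\rho'$ with respect to $f$ if for every $x\in\mathrm{supp}(\mathcal{D})$ with $f(x)=-1$ there is $i\in[k]$ with $(w_i\cdot x-\theta_i)/R\le-\rho'$. *)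

From HB Require Import structures.
From mathcomp Require Import all_boot all_order all_algebra.
From mathcomp Require Import boolp classical_sets reals.
Set Implicit Arguments. Unset Strict Implicit. Unset Printing Implicit Defensive.
Import Order.TTheory GRing.Theory Num.Theory.
Local Open Scope ring_scope.
Local Open Scope classical_set_scope.

Section Defs.
Variable R : realType.
Variable n : nat.

Definition dotv (u v : 'rV[R]_n) : R := \sum_(j < n) u 0 j * v 0 j.
Definition enorm (u : 'rV[R]_n) : R := Num.sqrt (dotv u u).

Definition hs_inter (k : nat) (w : 'I_k -> 'rV[R]_n) (theta : 'I_k -> R)
  (x : 'rV[R]_n) : R :=
  if [forall i, dotv (w i) x > theta i] then 1 else -1.

Definition radius (S : set 'rV[R]_n) : R := sup [set enorm x | x in S].

(* rho-robustness of (the support S of) D w.r.t. f *)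
Definition robust (S : set 'rV[R]_n) (f : 'rV[R]_n -> R) (rho : R) : Prop :=
  inf [set d | exists x y, S x /\ f x <> f y /\ d = enorm (x - y)] / radius S
    >= rho.

Definition has_margin (S : set 'rV[R]_n) (k : nat) (w : 'I_k -> 'rV[R]_n)
  (theta : 'I_k -> R) (rho' : R) : Prop :=
  forall x, S x -> hs_inter w theta x = -1 ->
    exists i : 'I_k, (dotv (w i) x - theta i) / radius S <= - rho'.

End Defs.

(* At a point [z] of the support where [f = 1], every slack [w_i . z - theta_i] is at
   least [D = rho R]: moving [z] by its slack along [-w_i] reaches a point where
   [f = -1].  Now let [x] be a support point with [f x = -1] and [m] its smallest
   slack.  For [t < rho / 2] the point [x + t (z - x)] lies within distance
   [2 t R < D] of [x], so [f = -1] there too: some slack [(1 - t) a_j + t b_j] of it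
   is nonpositive, where [a_j], [b_j] are the slacks of [x], [z].  As [b_j >= D],
   this forces [m <= a_j <= - t D].  Since this holds for every [t < rho / 2],
   [m <= - rho D / 2 = - (rho^2 / 2) R]. *)
From HB Require Import structures.
From mathcomp Require Import all_boot all_order all_algebra.
From mathcomp Require Import boolp classical_sets reals.
From mathcomp Require Import ring lra.
Set Implicit Arguments. Unset Strict Implicit. Unset Printing Implicit Defensive.
Import Order.TTheory GRing.Theory Num.Theory.
Local Open Scope ring_scope.
Local Open Scope classical_set_scope.

Section Euclidean.
Variables (R : realType) (n : nat).
Implicit Types (u v x z : 'rV[R]_n) (c r : R).

Lemma dotvBr u v1 v2 : dotv u (v1 - v2) = dotv u v1 - dotv u v2.
Proof.
by rewrite /dotv -sumrB; apply: eq_bigr => j _; rewrite !mxE mulrBr.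
Qed.

Lemma dotvZr u c v : dotv u (c *: v) = c * dotv u v.
Proof. by rewrite /dotv mulr_sumr; apply: eq_bigr => j _; rewrite !mxE mulrCA. Qed.

Lemma dotvZZ c u : dotv (c *: u) (c *: u) = c ^+ 2 * dotv u u.
Proof.
by rewrite /dotv mulr_sumr; apply: eq_bigr => j _; rewrite !mxE; ring.
Qed.

Lemma dotv_ge0 u : 0 <= dotv u u.
Proof. by apply: sumr_ge0 => j _; rewrite -expr2 sqr_ge0. Qed.

Lemma dotv_parallelogram x z :
  dotv (x - z) (x - z) + dotv (x + z) (x + z) = 2 * dotv x x + 2 * dotv z z.
Proof.
rewrite /dotv -big_split !mulr_sumr -big_split.
by apply: eq_bigr => j _; rewrite !mxE /=; ring.
Qed.

Lemma enorm_ge0 u : 0 <= enorm u.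
Proof. exact: sqrtr_ge0. Qed.

Lemma enorm_sq u : enorm u ^+ 2 = dotv u u.
Proof. by rewrite sqr_sqrtr // dotv_ge0. Qed.

Lemma enormZ c u : enorm (c *: u) = `|c| * enorm u.
Proof. by rewrite /enorm dotvZZ sqrtrM ?sqr_ge0 // sqrtr_sqr. Qed.

Lemma enormB_le x z r : enorm x <= r -> enorm z <= r -> enorm (x - z) <= 2 * r.
Proof.
move=> x_le z_le; have x_ge0 := enorm_ge0 x; have z_ge0 := enorm_ge0 z.
rewrite -ler_sqr ?nnegrE ?enorm_ge0 ?mulr_ge0 //; last exact: le_trans x_le.
have := dotv_parallelogram x z; have := dotv_ge0 (x + z).
rewrite -!enorm_sq; nra.
Qed.

End Euclidean.

Section HalfspaceIntersection.
Variables (R : realType) (n k : nat).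
Variables (w : 'I_k -> 'rV[R]_n) (theta : 'I_k -> R).
Implicit Types y : 'rV[R]_n.

Lemma hs_inter_neqN1 y : hs_inter w theta y <> -1 -> forall i, theta i < dotv (w i) y.
Proof. by rewrite /hs_inter; case: ifP => // /forallP. Qed.

Lemma hs_inter_neq1 y :
  hs_inter w theta y <> 1 -> exists i, dotv (w i) y <= theta i.
Proof.
rewrite /hs_inter; case: ifP => // /negbT/forallPn[i]; rewrite -leNgt.
by exists i.
Qed.

Lemma hs_inter_eqN1 y i : dotv (w i) y <= theta i -> hs_inter w theta y = -1.
Proof.
by move=> le_i; rewrite /hs_inter; case: ifP => // /forallP/(_ i); rewrite ltNge le_i.
Qed.

Lemma slack_ge_dist_to_neg z D :
  (forall i, dotv (w i) (w i) = 1) -> hs_inter w theta z <> -1 ->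
  (forall y, hs_inter w theta y = -1 -> D <= enorm (z - y)) ->
  forall i, D <= dotv (w i) z - theta i.
Proof.
move=> unit_w z_pos far_z i; set s := dotv (w i) z - theta i.
have s_gt0 : 0 < s by rewrite subr_gt0 hs_inter_neqN1.
have := far_z (z - s *: w i).
rewrite subKr enormZ gtr0_norm // /enorm unit_w sqrtr1 mulr1; apply.
by apply: (@hs_inter_eqN1 _ i); rewrite dotvBr dotvZr unit_w /s; lra.
Qed.

Lemma segment_exists_slack_le x z t D :
  0 < t < 1 -> t * enorm (x - z) < D ->
  (forall i, D <= dotv (w i) z - theta i) ->
  (forall y, hs_inter w theta y = 1 -> D <= enorm (x - y)) ->
  exists j, dotv (w j) x - theta j <= - (t * D).
Proof.
move=> /andP[t_gt0 t_lt1] txz_lt slack_z far_x.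
have [j y_neg] : exists j, dotv (w j) (x - t *: (x - z)) <= theta j.
  apply: hs_inter_neq1 => /far_x.
  by rewrite subKr enormZ gtr0_norm // leNgt txz_lt.
have D_gt0 : 0 < D by apply: le_lt_trans txz_lt; rewrite mulr_ge0 ?enorm_ge0 ?ltW.
exists j; have := slack_z j; move: y_neg; rewrite dotvBr dotvZr dotvBr; nra.
Qed.

Lemma exists_deep_slack x z c D :
  0 < D -> 0 < c <= 1 -> c * enorm (x - z) <= D -> hs_inter w theta x = -1 ->
  (forall i, D <= dotv (w i) z - theta i) ->
  (forall y, hs_inter w theta y = 1 -> D <= enorm (x - y)) ->
  exists i, dotv (w i) x - theta i <= - (c * D).
Proof.
move=> D_gt0 /andP[c_gt0 c_le1] cxz_le x_neg slack_z far_x.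
have [j0 j0_le] : exists j, dotv (w j) x <= theta j.
  by apply: hs_inter_neq1; rewrite x_neg => ?; lra.
case: (@arg_minP _ _ _ j0 predT (fun i => dotv (w i) x - theta i)) => // i0 _ i0_min.
set m := dotv (w i0) x - theta i0 in i0_min *.
have m_le0 : m <= 0 by have := i0_min j0 isT; lra.
exists i0; rewrite -/m leNgt; apply/negP => m_gt.
set u := m / D; have mE : m = u * D by rewrite /u divfK ?gt_eqF.
have u_le0 : u <= 0 by rewrite /u pmulr_lle0 ?invr_gt0.
have u_gt : - c < u by move: m_gt; rewrite mE -mulNr ltr_pM2r.
(* [t] lies strictly between [- m / D] and [c]. *)
set t := (c - u) / 2.
have t_bounds : 0 < t < 1 by apply/andP; split; rewrite /t; lra.
have txz_lt : t * enorm (x - z) < D.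
  by have := enorm_ge0 (x - z); rewrite /t; nra.
have [j j_le] := segment_exists_slack_le t_bounds txz_lt slack_z far_x.
by have := i0_min j isT; rewrite /t mE in j_le *; nra.
Qed.

End HalfspaceIntersection.

Section Robustness.
Variables (R : realType) (n : nat).
Variables (S : set 'rV[R]_n) (f : 'rV[R]_n -> R) (rho : R).
Hypothesis S_bounded : exists M : R, forall x, S x -> enorm x <= M.

Lemma enorm_le_radius x : S x -> enorm x <= radius S.
Proof.
move=> Sx; apply: ub_le_sup; last by exists x.
by have [M le_M] := S_bounded; exists M => _ [y Sy <-]; apply: le_M.
Qed.

Hypotheses (rho_gt0 : 0 < rho) (S_robust : robust S f rho).

Lemma robust_radius_gt0 z : S z -> 0 < radius S.
Proof.
move=> Sz; rewrite lt_neqAle (le_trans (enorm_ge0 z) (enorm_le_radius Sz)) andbT.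
apply/eqP => radius0; move: S_robust.
by rewrite /robust -radius0 invr0 mulr0 leNgt rho_gt0.
Qed.

Lemma robust_dist a y :
  0 < radius S -> S a -> f a <> f y -> rho * radius S <= enorm (a - y).
Proof.
move=> radius_gt0 Sa fa_neq; move: S_robust; rewrite /robust ler_pdivlMr //.
move/le_trans; apply; apply: ge_inf; last by exists a, y.
by exists 0 => _ [? [? [_ [_ ->]]]]; apply: enorm_ge0.
Qed.

End Robustness.

Theorem lemma2p6 (R : realType) (n k : nat) (w : 'I_k -> 'rV[R]_n)
  (theta : 'I_k -> R) (S : set 'rV[R]_n) (rho : R) :
  (forall i, enorm (w i) = 1) ->
  (exists M : R, forall x, S x -> enorm x <= M) ->
  0 < rho ->
  robust S (hs_inter w theta) rho ->
  (exists x, S x /\ hs_inter w theta x <> -1) ->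
  has_margin S w theta (rho ^+ 2 / 2).
Proof.
move=> unit_w bounded rho_gt0 rob [z [Sz z_pos]] x Sx x_neg.
have R_gt0 := robust_radius_gt0 bounded rho_gt0 rob Sz.
have sep := robust_dist rob R_gt0.
have unit_dot i : dotv (w i) (w i) = 1 by rewrite -enorm_sq unit_w expr1n.
have far_z y : hs_inter w theta y = -1 -> rho * radius S <= enorm (z - y).
  by move=> y_neg; apply: sep; rewrite ?y_neg.
have slack_z := slack_ge_dist_to_neg unit_dot z_pos far_z.
have xz_le := enormB_le (enorm_le_radius bounded Sx) (enorm_le_radius bounded Sz).
have rho_le2 : rho <= 2.
  have := sep x z Sx; rewrite x_neg => /(_ (nesym z_pos)) /le_trans /(_ xz_le).
  by rewrite ler_pM2r.
have D_gt0 : 0 < rho * radius S by rewrite mulr_gt0.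
have c_bounds : 0 < rho / 2 <= 1 by apply/andP; split; lra.
have cxz_le : rho / 2 * enorm (x - z) <= rho * radius S by nra.
have far_x y : hs_inter w theta y = 1 -> rho * radius S <= enorm (x - y).
  by move=> y_pos; apply: sep; rewrite // x_neg y_pos => ?; lra.
have [i deep] := exists_deep_slack D_gt0 c_bounds cxz_le x_neg slack_z far_x.
by exists i; rewrite ler_pdivrMr //; lra.
Qed.
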